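(* For every positive integer $\alpha$ and every integer $k>1$, $$N_\alpha(k,k)\le (k^3-k^2+k)\binom{k}{2}.$$
   Context: A $k$-power is a word $u^k=uu\cdots u$ ($k$ copies) for a nonempty word $u$. A $k$-anti-power is a word $w=w_1\cdots w_k$ with $|w_1|=\cdots=|w_k|$ and $w_1,\dots,w_k$ pairwise distinct. $N_\alpha(k,k)$ denotes the smallest positive integer $N$ such that every word of length $N$ over an alphabet of size $\alpha$ contains a factor (contiguous subword) that is a $k$-power or a $k$-anti-power. *)

From mathcomp Require Import all_boot.
Set Implicit Arguments. Unset Strict Implicit. Unset Printing Implicit Defensive.

Definition factor (T : eqType) (u w : seq T) : bool := infix u w.

Definition is_kpower (T : eqType) (k : nat) (w : seq T) : Prop :=
  exists u : seq T, u != [::] /\ w = flatten (nseq k u).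

Definition is_kantipower (T : eqType) (k : nat) (w : seq T) : Prop :=
  exists bs : seq (seq T),
    [/\ size bs = k, w = flatten bs,
        (forall b1 b2, b1 \in bs -> b2 \in bs -> size b1 = size b2) & uniq bs].

Definition forces (alpha k N : nat) : Prop :=
  forall w : seq 'I_alpha, size w = N ->
    exists v : seq 'I_alpha, factor v w /\ (is_kpower k v \/ is_kantipower k v).

Definition is_N_alpha_kk (alpha k N : nat) : Prop :=
  [/\ 0 < N, forces alpha k N & forall M, 0 < M -> forces alpha k M -> N <= M].

From mathcomp Require Import all_boot zify.
From Stdlib Require Import Classical.
From Stdlib Require Wf_nat.

Set Implicit Arguments.
Unset Strict Implicit.
Unset Printing Implicit Defensive.

(* Put c = 'C(k, 2) and m0 = k (k - 1) c, and for each length m in [m0, m0 + c]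
   cut the prefix of w into k consecutive blocks of length m.  If for some m
   these blocks are pairwise distinct, they form a k-anti-power.  Otherwise each
   of the c + 1 lengths has a pair i < j of equal blocks, and by pigeonhole two
   lengths m < m + dm share the same pair.  Chaining the two coincidences shows
   that the factor of length k (j - i) dm starting at j m + i dm has period
   (j - i) dm, hence is a k-power; m0 is chosen so that every shift involved
   stays within a single block. *)

Lemma ex_least_nat (P : nat -> Prop) (n : nat) :
  P n -> exists m, P m /\ forall l, P l -> m <= l.
Proof.
move=> Pn; have [m [[Pm m_least] _]] :=
  Wf_nat.dec_inh_nat_subset_has_unique_least_element P (fun l => classic (P l))
    (ex_intro _ n Pn).
by exists m; split => // l /m_least /leP.
Qed.

Lemma pigeonhole_ltn_pairs (k n : nat) (g : 'I_n -> 'I_k * 'I_k) :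
  'C(k, 2) < n -> (forall x, (g x).1 < (g x).2) ->
  exists x y : 'I_n, x < y /\ g x = g y.
Proof.
move=> lt_c_n lt_g; pose t x : 2.-tuple 'I_k := [tuple (g x).1; (g x).2].
have /injectivePn [x [y neq_xy eq_txy]] : ~~ injectiveb t.
  apply: contraTN lt_c_n => /injectiveP inj_t; rewrite -leqNgt.
  rewrite -card_ltn_sorted_tuples -[n in n <= _]card_ord -cardsT.
  rewrite -(card_imset _ inj_t); apply/subset_leq_card/subsetP.
  by move=> _ /imsetP[z _ ->]; rewrite inE /= andbT lt_g.
have eq_gxy : g x = g y.
  move: eq_txy => /(congr1 val) [eq1 eq2].
  by rewrite [g x]surjective_pairing [g y]surjective_pairing eq1 eq2.
case: (ltngtP x y) => [lt_xy | lt_yx | /val_inj eq_xy]; first by exists x, y.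
  by exists y, x.
by rewrite eq_xy eqxx in neq_xy.
Qed.

Lemma factor_take_drop (T : eqType) (n a : nat) (w : seq T) :
  factor (take n (drop a w)) w.
Proof. exact: infix_trans (infix_take _ _) (infix_drop _ _). Qed.

Lemma take_drop_shift (T : Type) (s : seq T) (m n a b t : nat) :
  take m (drop a s) = take m (drop b s) -> t + n <= m ->
  take n (drop (a + t) s) = take n (drop (b + t) s).
Proof.
move=> eq_ab le_tnm.
have trunc (x : seq T) : take n (drop t x) = take n (drop t (take m x)).
  by rewrite !take_drop take_takel // addnC.
by rewrite !(addnC _ t) -!drop_drop trunc eq_ab -trunc.
Qed.

Lemma period_flatten_nseq (T : Type) (k p : nat) (v : seq T) :
  size v = k * p -> drop p v = take (size v - p) v ->
  v = flatten (nseq k (take p v)).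
Proof.
elim: k v => [|k IHk] v size_v per_v; first by apply/size0nil; rewrite size_v.
rewrite -[v in LHS](cat_take_drop p) /=; congr (_ ++ _).
case: k IHk size_v => [|k] IHk size_v.
  by apply/size0nil; rewrite size_drop size_v; lia.
have le_p_vp : p <= size v - p by rewrite size_v; lia.
have take_dropp : take p (drop p v) = take p v by rewrite per_v take_takel.
rewrite -take_dropp; apply: IHk; first by rewrite size_drop size_v; lia.
by rewrite size_drop take_drop subnK // -per_v.
Qed.

Lemma kpower_of_period (T : eqType) (k p : nat) (v : seq T) :
  0 < k -> 0 < p -> size v = k * p -> drop p v = take (size v - p) v ->
  is_kpower k v.
Proof.
move=> k_gt0 p_gt0 size_v per_v; exists (take p v); split.
  by rewrite -size_eq0 size_takel ?size_v ?leq_pmull // -lt0n.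
exact: period_flatten_nseq.
Qed.

Section Blocks.

Variables (T : eqType) (w : seq T).

Definition block (m i : nat) : seq T := take m (drop (i * m) w).

Definition blocks (k m : nat) : seq (seq T) := [seq block m i | i <- iota 0 k].

Lemma flatten_blocks_from (k m a : nat) :
  flatten [seq block m i | i <- iota a k] = take (k * m) (drop (a * m) w).
Proof.
elim: k a => [|k IHk] a /=; first by rewrite take0.
by rewrite IHk !mulSn takeD drop_drop.
Qed.

Lemma kantipower_blocks (k m : nat) :
  k * m <= size w -> uniq (blocks k m) -> is_kantipower k (take (k * m) w).
Proof.
move=> le_km_w uniq_bs; exists (blocks k m); split => //.
- by rewrite size_map size_iota.
- by rewrite flatten_blocks_from drop0.
have size_block i : i < k -> size (block m i) = m.
  by move=> lt_ik; rewrite size_takel // size_drop; nia.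
by move=> _ _ /mapP[i + ->] /mapP[j + ->]; rewrite !mem_iota => /= lt_ik lt_jk;
  rewrite !size_block.
Qed.

Lemma repeated_block (k m : nat) : ~~ uniq (blocks k m) ->
  exists i j, [/\ i < j, j < k & block m i = block m j].
Proof.
case/(uniqPn [::]) => i [j []]; rewrite size_map size_iota => lt_ij lt_jk.
have lt_ik := ltn_trans lt_ij lt_jk.
by rewrite !(nth_map 0) ?size_iota // !nth_iota //; exists i, j.
Qed.

Lemma kpower_of_repeated_blocks (k m dm i d : nat) :
  0 < d -> 0 < dm -> i + d < k -> k * (m + dm) <= size w ->
  (k.-1 * d + i) * dm <= m ->
  block m i = block m (i + d) -> block (m + dm) i = block (m + dm) (i + d) ->
  is_kpower k (take (k * (d * dm)) (drop ((i + d) * m + i * dm) w)).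
Proof.
move=> d_gt0 dm_gt0 lt_idk le_w le_m rep_m rep_mdm.
set p := d * dm; set s := (i + d) * m + i * dm; set n := k.-1 * p.
have p_gt0 : 0 < p by rewrite muln_gt0 d_gt0.
have le_p_kp : p <= k * p by rewrite leq_pmull //; lia.
have size_v : size (take (k * p) (drop s w)) = k * p.
  rewrite size_takel // size_drop leq_subRL; last by rewrite /s /p; nia.
  by apply: leq_trans le_w; rewrite /s /p; nia.
apply: (kpower_of_period _ p_gt0 size_v); first lia.
rewrite size_v take_takel ?leq_subr // -{1}(subnK le_p_kp) -take_drop drop_drop.
have -> : k * p - p = n by rewrite /n -subn1 mulnBl mul1n.
(* Read from s + p = (i + d) (m + dm): the two coincidences carry the window,
   via position i (m + dm) = i m + i dm, back to s = (i + d) m + i dm. *)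
have -> : p + s = (i + d) * (m + dm) + 0 by rewrite /p /s; nia.
rewrite -(take_drop_shift rep_mdm); last by rewrite /n /p; nia.
have -> : i * (m + dm) + 0 = i * m + i * dm by rewrite addn0 mulnDr.
by rewrite (take_drop_shift rep_m) // /n /p; nia.
Qed.

End Blocks.

Lemma kpower_or_kantipower (T : eqType) (k : nat) (w : seq T) :
  k * (k * k.-1 * 'C(k, 2) + 'C(k, 2)) <= size w ->
  exists v, factor v w /\ (is_kpower k v \/ is_kantipower k v).
Proof.
set c := 'C(k, 2); set m0 := k * k.-1 * c => le_w.
have [/existsP[x uniq_x] | /existsPn repeated] :=
  boolP [exists x : 'I_c.+1, uniq (blocks w k (m0 + x))].
  exists (take (k * (m0 + x)) w); split; first exact: infix_take.
  right; apply: kantipower_blocks uniq_x; apply: leq_trans le_w.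
  by rewrite leq_mul2l leq_add2l -ltnS ltn_ord orbT.
have /fin_all_exists[g g_rep] (x : 'I_c.+1) : exists ij : 'I_k * 'I_k,
    ij.1 < ij.2 /\ block w (m0 + x) ij.1 = block w (m0 + x) ij.2.
  have [i [j [lt_ij lt_jk rep_ij]]] := repeated_block (repeated x).
  by exists (Ordinal (ltn_trans lt_ij lt_jk), Ordinal lt_jk).
have [x [y [lt_xy eq_gxy]]] :=
  pigeonhole_ltn_pairs (ltnSn c) (fun x => (g_rep x).1).
move: (g_rep x) (g_rep y); rewrite -eq_gxy.
case: (g x) => i j /= [lt_ij rep_x] [_ rep_y].
have le_y_c : y <= c by rewrite -ltnS.
rewrite -(subnKC (ltnW lt_ij)) in rep_x rep_y.
rewrite (_ : m0 + y = m0 + x + (y - x)) in rep_y; last lia.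
exists (take (k * ((j - i) * (y - x)))
          (drop ((i + (j - i)) * (m0 + x) + i * (y - x)) w)).
split; first exact: factor_take_drop.
left; apply: (kpower_of_repeated_blocks _ _ _ _ _ rep_x rep_y).
all: rewrite ?subn_gt0 //.
- by rewrite subnKC // ltnW.
- by apply: leq_trans le_w; rewrite leq_mul2l; lia.
apply: leq_trans (leq_addr _ _); rewrite /m0 leq_mul //; last lia.
by have := ltn_ord j; nia.
Qed.

Lemma bound_factor (k : nat) :
  (k ^ 3 - k ^ 2 + k) * 'C(k, 2) = k * (k * k.-1 * 'C(k, 2) + 'C(k, 2)).
Proof. by case: k => // k; rewrite !expnS expn0 !muln1 /=; nia. Qed.

Theorem corollary3p10 (alpha k : nat) :
  0 < alpha -> 1 < k ->
  exists N, is_N_alpha_kk alpha k N /\ N <= (k ^ 3 - k ^ 2 + k) * 'C(k, 2).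
Proof.
move=> _ lt1k; set B := (k ^ 3 - k ^ 2 + k) * 'C(k, 2).
have forces_B : forces alpha k B.
  by move=> w size_w; apply: kpower_or_kantipower; rewrite size_w /B bound_factor.
have B_gt0 : 0 < B by rewrite /B muln_gt0 bin_gt0 lt1k andbT; lia.
have [N [[N_gt0 forces_N] N_least]] :=
  ex_least_nat (P := fun M => 0 < M /\ forces alpha k M) (conj B_gt0 forces_B).
exists N; split; last exact: N_least.
by split=> // M M_gt0 forces_M; apply: N_least.
Qed.
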